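(* Let $A$ be a finite nonempty subset of an abelian group $\mathbf{G}$ and let $k\geq 1$ be an integer. Then $$|A|^{2k}\le \mathsf{E}_k(A)\cdot \sigma_k(A-A),\qquad |A|^{4k}\le \mathsf{E}_{2k}(A)\cdot \mathsf{T}_k(A+A),$$ and $$|A|^{2k+4}\le \mathsf{E}_{k+2}(A)\cdot \mathsf{E}_k(A-A),\qquad |A|^{2k+4}\le \mathsf{E}_{k+2}(A)\cdot \mathsf{E}_k(A+A).$$
   Context: For finite $X\subseteq\mathbf{G}$ write $(X\circ X)(x)=|\{(a,b)\in X^2: b-a=x\}|$. For an integer $j\ge 2$, $\mathsf{E}_j(X)=\sum_{x\in\mathbf G}(X\circ X)(x)^j$, and $\mathsf{E}_1(X)=|X|^2$. $\sigma_k(X)=|\{(x_1,\dots,x_k)\in X^k: x_1+\dots+x_k=0\}|$. $\mathsf{T}_k(X)=|\{(x_1,\dots,x_k,x_1',\dots,x_k')\in X^{2k}: x_1+\dots+x_k=x_1'+\dots+x_k'\}|$. $A\pm A=\{a\pm b: a,b\in A\}$. *)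

From HB Require Import structures.
From mathcomp Require Import all_boot all_order all_algebra.
From mathcomp Require Import finmap.
Set Implicit Arguments. Unset Strict Implicit. Unset Printing Implicit Defensive.
Import GRing.Theory.
Local Open Scope fset_scope.
Local Open Scope ring_scope.

Definition sumset (G : zmodType) (A B : {fset G}) : {fset G} :=
  [fset a + b | a in A, b in B].
Definition diffset (G : zmodType) (A B : {fset G}) : {fset G} :=
  [fset a - b | a in A, b in B].

Definition repr_diff (G : zmodType) (X : {fset G}) (x : G) : nat :=
  #|[set p : X * X | val p.2 - val p.1 == x]|.

(* E_j(X) = sum_{x in G} (X o X)(x)^j ; the summand vanishes outside X - X
   (for j >= 1), so the sum is taken over X - X. For j = 1 this equals |X|^2. *)
Definition energy (G : zmodType) (j : nat) (X : {fset G}) : nat :=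
  (\sum_(x <- diffset X X) repr_diff X x ^ j)%N.

Definition sigma (G : zmodType) (k : nat) (X : {fset G}) : nat :=
  #|[set t : {ffun 'I_k -> X} | \sum_(i < k) val (t i) == 0]|.

Definition Tk (G : zmodType) (k : nat) (X : {fset G}) : nat :=
  #|[set p : {ffun 'I_k -> X} * {ffun 'I_k -> X} |
      \sum_(i < k) val (p.1 i) == \sum_(i < k) val (p.2 i)]|.

(* Each inequality is Cauchy-Schwarz for a map g from tuples over A into a
   set P: |A|^(2m) <= |P| * #{(a, a') : g a = g a'}.  The map is chosen so that
   colliding tuples are coordinatewise translates of one another (the shift
   being reversed on some fixed coordinates), and such pairs are counted by
   E_m(A).  For sigma_k(A - A), g sends a in A^k to its cyclic differences
   (a_(i+1) - a_i), whose sum vanishes; for T_k(A + A), g sends (a, b) in A^2k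
   to the zigzag sums (a_i + b_i) and (b_i + a_(i+1)), which have equal total
   sums; for E_k(A - A) and E_k(A + A), g sends (a, x, y) in A^(k+2) to the
   pair (a_i - x), (a_i - y), resp. (a_i + x), (a_i + y), two vectors that
   differ by a constant and are therefore counted by E_k(A - A), resp.
   E_k(A + A). *)

From HB Require Import structures.
From mathcomp Require Import all_boot all_order all_algebra.
From mathcomp Require Import finmap.
Import GRing.Theory.
Set Implicit Arguments. Unset Strict Implicit. Unset Printing Implicit Defensive.

Lemma nat_Cauchy_sum (I : finType) (P : {pred I}) (x : I -> nat) :
  (\sum_(i in P) x i) ^ 2 <= #|P| * \sum_(i in P) x i ^ 2.
Proof.
have sqr_sum : (\sum_(i in P) x i) ^ 2 = \sum_(i in P) \sum_(j in P) x i * x j.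
  by rewrite -mulnn big_distrl; apply: eq_bigr => i _; rewrite big_distrr.
have twice_rhs : 2 * (#|P| * \sum_(i in P) x i ^ 2) =
                 \sum_(i in P) \sum_(j in P) (x i ^ 2 + x j ^ 2).
  rewrite mul2n -addnn -sum_nat_const {1}exchange_big -big_split /=.
  by apply: eq_bigr => i _; rewrite big_split /= sum_nat_const.
rewrite -(leq_pmul2l (isT : 0 < 2)) twice_rhs sqr_sum big_distrr.
apply: leq_sum => i _; rewrite big_distrr; apply: leq_sum => j _.
exact: nat_Cauchy.
Qed.

Lemma card_fibres (T U : finType) (f : T -> U) (S : {pred T}) (B : {pred U}) :
  {in S, forall t, f t \in B} -> #|S| = \sum_(u in B) #|[set t in S | f t == u]|.
Proof.
move=> fSB; rewrite -sum1_card (partition_big f (mem B)) //=.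
by apply: eq_bigr => u _; rewrite -sum1_card; apply: eq_bigl => t; rewrite inE.
Qed.

Lemma card_sqr_le_mul_collisions (W T : finType) (g : W -> T) (P : {set T}) :
  (forall w, g w \in P) ->
  #|W| ^ 2 <= #|P| * #|[set p : W * W | g p.1 == g p.2]|.
Proof.
move=> gP; pose fibre t := #|[set w | g w == t]|.
have -> : #|W| = \sum_(t in P) fibre t by rewrite (@card_fibres _ _ g W P).
have -> : #|[set p : W * W | g p.1 == g p.2]| = \sum_(t in P) fibre t ^ 2.
  rewrite (@card_fibres _ _ (fun p : W * W => g p.1) _ P) //.
  apply: eq_bigr => t _; rewrite -mulnn -cardsX; apply: eq_card => -[w1 w2].
  by rewrite !inE /=; case: (g w1 =P t) => [->|]; rewrite ?andbT ?andbF // eq_sym.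
exact: nat_Cauchy_sum.
Qed.

Lemma ordS_invariant_const (T : Type) (n : nat) (f : 'I_n.+1 -> T) :
  (forall i, f (ordS i) = f i) -> forall i, f i = f ord0.
Proof.
move=> fS i; rewrite -[i]inord_val; elim: (val i) (ltn_ord i) => [|j IHj] lt_j.
  by congr f; apply: val_inj; rewrite /= inordK.
have -> : inord j.+1 = ordS (inord j : 'I_n.+1).
  by apply: val_inj; rewrite /= !inordK ?modn_small // ltnW.
by rewrite fS IHj // ltnW.
Qed.

Section AdditiveIdentities.
Variable G : zmodType.
Local Open Scope ring_scope.

Lemma eq_subr_transpose (x y x' y' : G) : x - y = x' - y' -> x' - x = y' - y.
Proof. by move=> h; rewrite -(subrK y' x') -h addrAC [x - y]addrC addrK addrC. Qed.

Lemma eq_addr_transpose (x y x' y' : G) : x + y = x' + y' -> x' - x = y - y'.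
Proof. by move=> h; rewrite -(addrK y' x') -h addrAC [x + y]addrC addrK. Qed.

Lemma subrKB (x y z : G) : (x - z) - (x - y) = y - z.
Proof. by rewrite opprB addrC subrKA. Qed.

Lemma addrKB (x y z : G) : (x + z) - (x + y) = z - y.
Proof. by rewrite [x + z]addrC addrKA. Qed.

End AdditiveIdentities.

Section EnergyBound.
Variable G : zmodType.
Local Open Scope ring_scope.

Definition signed_sub (b : bool) (x y : G) : G := if b then x - y else y - x.

Lemma subr_in_diffset (Y : {fset G}) (x y : Y) : val x - val y \in diffset Y Y.
Proof. by apply: (in_imfset2 _ (fun a b => a - b)); apply: valP. Qed.

Lemma addr_in_sumset (Y : {fset G}) (x y : Y) : val x + val y \in sumset Y Y.
Proof. by apply: (in_imfset2 _ (fun a b => a + b)); apply: valP. Qed.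

Lemma signed_sub_diffset (Y : {fset G}) b (x y : Y) :
  signed_sub b (val x) (val y) \in diffset Y Y.
Proof. by case: b; apply: subr_in_diffset. Qed.

Variables (Y : {fset G}) (I : finType) (i0 : I) (flip : I -> bool).

Definition common_shift (a a' : {ffun I -> Y}) : Prop :=
  forall i, signed_sub (flip i) (val (a i)) (val (a' i)) =
            signed_sub (flip i0) (val (a i0)) (val (a' i0)).

Lemma card_common_shift_le_energy (S : {set {ffun I -> Y} * {ffun I -> Y}}) :
  {in S, forall aa, common_shift aa.1 aa.2} -> (#|S| <= energy #|I| Y)%N.
Proof.
move=> shiftS; pose D := diffset Y Y.
pose shift (aa : {ffun I -> Y} * {ffun I -> Y}) : D :=
  FSetSub (signed_sub_diffset (flip i0) (aa.1 i0) (aa.2 i0)).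
rewrite (@card_fibres _ _ shift S predT) // /energy big_seq_fsetE /=.
apply: leq_sum => c _; rewrite /repr_diff -card_ffun_on.
pose orient (aa : {ffun I -> Y} * {ffun I -> Y}) : {ffun I -> Y * Y} :=
  [ffun i => if flip i then (aa.2 i, aa.1 i) else (aa.1 i, aa.2 i)].
have orient_inj : injective orient.
  move=> [a1 a1'] [a2 a2'] /ffunP eq12.
  suff eqi i : (a1 i, a1' i) = (a2 i, a2' i).
    by congr (_, _); apply/ffunP => i; case: (eqi i).
  by move: (eq12 i); rewrite !ffunE; case: (flip i) => -[-> ->].
rewrite -(card_imset _ orient_inj); apply: subset_leq_card.
apply/subsetP => f /imsetP [aa]; rewrite inE => /andP [aaS /eqP <-] ->.
apply/ffun_onP => i; rewrite ffunE inE /= -(shiftS aa aaS i) /signed_sub.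
by case: (flip i).
Qed.

Lemma card_pow_le_energy_mul (T : finType) (g : {ffun I -> Y} -> T) (P : {set T}) :
  (forall a, g a \in P) -> (forall a a', g a = g a' -> common_shift a a') ->
  (#|` Y| ^ (2 * #|I|) <= energy #|I| Y * #|P|)%N.
Proof.
move=> gP g_shift; have := card_sqr_le_mul_collisions gP.
rewrite card_ffun -cardfE -expnM mulnC => /leq_trans; apply.
rewrite mulnC leq_mul // card_common_shift_le_energy // => -[a a'].
by rewrite inE => /eqP; apply: g_shift.
Qed.

End EnergyBound.

Definition shift_pairs (G : zmodType) (Z : {fset G}) (n : nat) :
    {set {ffun 'I_n.+1 -> Z} * {ffun 'I_n.+1 -> Z}} :=
  [set pq : {ffun 'I_n.+1 -> Z} * {ffun 'I_n.+1 -> Z} |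
     [forall i, val (pq.2 i) - val (pq.1 i) == val (pq.2 ord0) - val (pq.1 ord0)]%R].

Lemma card_shift_pairs_le_energy (G : zmodType) (Z : {fset G}) (n : nat) :
  (#|shift_pairs Z n| <= energy n.+1 Z)%N.
Proof.
rewrite -[in energy _ _](card_ord n.+1).
apply: (card_common_shift_le_energy (i0 := ord0) (flip := fun=> false)) => pq.
by rewrite inE => /forallP same_shift i; apply/eqP/same_shift.
Qed.

Section EnergyInequalities.
Variables (G : zmodType) (A : {fset G}) (n : nat).
Local Open Scope ring_scope.
Local Notation D := (diffset A A).
Local Notation S := (sumset A A).

Lemma pow_le_energy_mul_sigma_diffset :
  (#|` A| ^ (2 * n.+1) <= energy n.+1 A * sigma n.+1 D)%N.
Proof.
pose step (a : {ffun 'I_n.+1 -> A}) : {ffun 'I_n.+1 -> D} :=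
  [ffun i => FSetSub (subr_in_diffset (a (ordS i)) (a i))].
have := card_pow_le_energy_mul (i0 := ord0) (flip := fun=> false) (g := step).
rewrite card_ord; apply.
- move=> a; rewrite inE; apply/eqP.
  under eq_bigr do rewrite ffunE /=.
  by rewrite sumrB [X in _ - X](reindex_inj (@ordS_inj n.+1)) subrr.
- move=> a a' /ffunP same_steps; rewrite /common_shift /signed_sub.
  apply: (ordS_invariant_const (f := fun i => val (a' i) - val (a i))) => i.
  by apply: eq_subr_transpose; move: (same_steps i); rewrite !ffunE => /(congr1 val).
Qed.

Lemma pow_le_energy_mul_Tk_sumset :
  (#|` A| ^ (4 * n.+1) <= energy (2 * n.+1) A * Tk n.+1 S)%N.
Proof.
pose zigzag (a : {ffun bool * 'I_n.+1 -> A}) :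
    {ffun 'I_n.+1 -> S} * {ffun 'I_n.+1 -> S} :=
  ([ffun i => FSetSub (addr_in_sumset (a (false, i)) (a (true, i)))],
   [ffun i => FSetSub (addr_in_sumset (a (true, i)) (a (false, ordS i)))]).
have := card_pow_le_energy_mul (i0 := (false, ord0)) (flip := fst) (g := zigzag).
rewrite card_prod card_bool card_ord mulnA; apply.
- move=> a; rewrite inE; apply/eqP => /=.
  under eq_bigr do rewrite ffunE /=.
  under [RHS]eq_bigr do rewrite ffunE /=.
  by rewrite !big_split /= addrC [X in _ + X = _](reindex_inj (@ordS_inj n.+1)).
- move=> a a' [/ffunP same_fst /ffunP same_snd].
  pose f i := val (a' (false, i)) - val (a (false, i)).
  have f_true i : f i = val (a (true, i)) - val (a' (true, i)).
    by apply: eq_addr_transpose; move: (same_fst i); rewrite !ffunE => /(congr1 val).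
  have f_const : forall i, f i = f ord0.
    apply: ordS_invariant_const => i; rewrite (f_true i); apply: eq_addr_transpose.
    move: (same_snd i); rewrite !ffunE => /(congr1 val) /= same.
    by rewrite addrC same addrC.
  move=> [[] i]; last exact: f_const.
  exact: etrans (esym (f_true i)) (f_const i).
Qed.

Lemma pow_le_energy_mul_energy_diffset :
  (#|` A| ^ (2 * n.+1 + 4) <= energy (n.+1 + 2) A * energy n.+1 D)%N.
Proof.
pose diffs (a : {ffun option (option 'I_n.+1) -> A}) :
    {ffun 'I_n.+1 -> D} * {ffun 'I_n.+1 -> D} :=
  ([ffun i => FSetSub (subr_in_diffset (a (Some (Some i))) (a None))],
   [ffun i => FSetSub (subr_in_diffset (a (Some (Some i))) (a (Some None)))]).
have := card_pow_le_energy_mul (i0 := None) (flip := fun=> false) (g := diffs)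
  (P := shift_pairs D n).
rewrite !card_option card_ord -(addn2 n.+1) mulnDr => bound.
apply: leq_trans (bound _ _) _.
- by move=> a; rewrite inE; apply/forallP => i; rewrite !ffunE /= !subrKB.
- move=> a a' [/ffunP same_fst /ffunP same_snd].
  have shift_None i : val (a' (Some (Some i))) - val (a (Some (Some i))) =
                      val (a' None) - val (a None).
    by apply: eq_subr_transpose; move: (same_fst i); rewrite !ffunE => /(congr1 val).
  have shift_SNone i : val (a' (Some (Some i))) - val (a (Some (Some i))) =
                       val (a' (Some None)) - val (a (Some None)).
    by apply: eq_subr_transpose; move: (same_snd i); rewrite !ffunE => /(congr1 val).
  by move=> [[i|]|] //=; rewrite /signed_sub ?shift_None // -(shift_SNone ord0).
- by rewrite leq_mul2l card_shift_pairs_le_energy orbT.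
Qed.

Lemma pow_le_energy_mul_energy_sumset :
  (#|` A| ^ (2 * n.+1 + 4) <= energy (n.+1 + 2) A * energy n.+1 S)%N.
Proof.
pose sums (a : {ffun option (option 'I_n.+1) -> A}) :
    {ffun 'I_n.+1 -> S} * {ffun 'I_n.+1 -> S} :=
  ([ffun i => FSetSub (addr_in_sumset (a (Some (Some i))) (a None))],
   [ffun i => FSetSub (addr_in_sumset (a (Some (Some i))) (a (Some None)))]).
pose flip (j : option (option 'I_n.+1)) := if j is Some (Some _) then false else true.
have := card_pow_le_energy_mul (i0 := None) (flip := flip) (g := sums)
  (P := shift_pairs S n).
rewrite !card_option card_ord -(addn2 n.+1) mulnDr => bound.
apply: leq_trans (bound _ _) _.
- by move=> a; rewrite inE; apply/forallP => i; rewrite !ffunE /= !addrKB.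
- move=> a a' [/ffunP same_fst /ffunP same_snd].
  have shift_None i : val (a' (Some (Some i))) - val (a (Some (Some i))) =
                      val (a None) - val (a' None).
    by apply: eq_addr_transpose; move: (same_fst i); rewrite !ffunE => /(congr1 val).
  have shift_SNone i : val (a' (Some (Some i))) - val (a (Some (Some i))) =
                       val (a (Some None)) - val (a' (Some None)).
    by apply: eq_addr_transpose; move: (same_snd i); rewrite !ffunE => /(congr1 val).
  by move=> [[i|]|] //=; rewrite /signed_sub /= ?shift_None // -(shift_SNone ord0).
- by rewrite leq_mul2l card_shift_pairs_le_energy orbT.
Qed.

End EnergyInequalities.

Unset Implicit Arguments.
Local Open Scope fset_scope.

Theorem lemma3 (G : zmodType) (A : {fset G}) (k : nat) :
  A != fset0 -> (1 <= k)%N ->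
  [/\ (#|` A| ^ (2 * k) <= energy k A * sigma k (diffset A A))%N,
      (#|` A| ^ (4 * k) <= energy (2 * k) A * Tk k (sumset A A))%N,
      (#|` A| ^ (2 * k + 4) <= energy (k + 2) A * energy k (diffset A A))%N &
      (#|` A| ^ (2 * k + 4) <= energy (k + 2) A * energy k (sumset A A))%N].
Proof.
move=> _; case: k => // n _; split.
- exact: pow_le_energy_mul_sigma_diffset.
- exact: pow_le_energy_mul_Tk_sumset.
- exact: pow_le_energy_mul_energy_diffset.
- exact: pow_le_energy_mul_energy_sumset.
Qed.
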